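(* Let $\mathcal{X}\subseteq\mathbb{R}^n$, $\mathcal{Y}=\{0,1\}$, let $\mathcal{Z}$ be a set (the representation space), let $\mathcal{G}$ be a class of functions $g:\mathcal{X}\to\mathcal{Z}$ and $\mathcal{F}$ a class of functions $f:\mathcal{Z}\to\mathcal{Y}$. Let $p_S,p_T$ be probability distributions on $\mathcal{X}\times\mathcal{Y}$. Then for all $f\in\mathcal{F}$ and $g\in\mathcal{G}$, $$R_T(fg)\le R_S(fg)+d_{\mathcal{F}\Delta\mathcal{F}}\big(p_S^g(Z),p_T^g(Z)\big)+d_{\mathcal{F}_{\mathcal{G}\Delta\mathcal{G}}}(p_S,p_T)+\lambda_{\mathcal{F}\mathcal{G}}(g),$$ where $$\lambda_{\mathcal{F}\mathcal{G}}(g)=\inf_{f'\in\mathcal{F},\,g'\in\mathcal{G}}\Big[2R_S(f'g)+R_S(f'g')+R_T(f'g')\Big].$$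
   Context: $fg$ denotes the composition $f\circ g:\mathcal{X}\to\mathcal{Y}$. The loss $\ell$ is the zero-one loss $\ell(a,b)=\mathbf{1}[a\neq b]$. For a hypothesis $h:\mathcal{X}\to\mathcal{Y}$ and $D\in\{S,T\}$, the risk is $R_D(h)=\mathbb{E}_{(x,y)\sim p_D}[\ell(h(x),y)]$, and for two hypotheses $h,h'$ the disagreement is $R_D(h,h')=\mathbb{E}_{x\sim p_D}[\ell(h(x),h'(x))]$, where $x\sim p_D$ refers to the marginal of $p_D$ on $\mathcal{X}$. $p_S^g(Z)$, $p_T^g(Z)$ denote the distributions of $g(X)$ for $X$ drawn from the $\mathcal{X}$-marginal of $p_S$, resp. $p_T$. The latent divergence is $d_{\mathcal{F}\Delta\mathcal{F}}(p_S^g(Z),p_T^g(Z))=\sup_{f_1,f_2\in\mathcal{F}}|R_S(f_1g,f_2g)-R_T(f_1g,f_2g)|$. The $\mathcal{F}_{\mathcal{G}\Delta\mathcal{G}}$-divergence is $d_{\mathcal{F}_{\mathcal{G}\Delta\mathcal{G}}}(p_S,p_T)=\sup_{f\in\mathcal{F};\,g_1,g_2\in\mathcal{G}}|R_S(fg_1,fg_2)-R_T(fg_1,fg_2)|$. *)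

From mathcomp Require Import all_boot all_order all_algebra.
From mathcomp Require Import all_classical all_reals all_analysis.
Set Implicit Arguments. Unset Strict Implicit. Unset Printing Implicit Defensive.
Import Order.TTheory GRing.Theory Num.Theory.
Local Open Scope classical_set_scope.
Local Open Scope ereal_scope.

Section Risks.
Context {d : measure_display} {X : measurableType d} {R : realType}.

(* R_D(h) = E_{(x,y)~p}[1[h x <> y]] = p {(x,y) | h x != y} *)
Definition risk (p : probability (X * bool)%type R) (h : X -> bool) : \bar R :=
  p [set xy | h xy.1 != xy.2].

(* R_D(h,h') = E_{x ~ marginal of p}[1[h x <> h' x]] *)
Definition disagreement (p : probability (X * bool)%type R) (h h' : X -> bool) : \bar R :=
  p [set xy | h xy.1 != h' xy.1].

Definition latent_div {Z : Type} (F : set (Z -> bool)) (g : X -> Z)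
    (pS pT : probability (X * bool)%type R) : \bar R :=
  ereal_sup [set v | exists f1 f2, [/\ F f1, F f2 &
     v = `|disagreement pS (f1 \o g) (f2 \o g) - disagreement pT (f1 \o g) (f2 \o g)|]].

Definition FGG_div {Z : Type} (F : set (Z -> bool)) (G : set (X -> Z))
    (pS pT : probability (X * bool)%type R) : \bar R :=
  ereal_sup [set v | exists f g1 g2, [/\ F f, G g1, G g2 &
     v = `|disagreement pS (f \o g1) (f \o g2) - disagreement pT (f \o g1) (f \o g2)|]].

Definition lambda_FG {Z : Type} (F : set (Z -> bool)) (G : set (X -> Z))
    (pS pT : probability (X * bool)%type R) (g : X -> Z) : \bar R :=
  ereal_inf [set v | exists f' g', [/\ F f', G g' &
     v = 2%:E * risk pS (f' \o g) + risk pS (f' \o g') + risk pT (f' \o g')]].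
End Risks.

From mathcomp Require Import all_boot all_order all_algebra.
From mathcomp Require Import all_classical all_reals all_analysis.
Set Implicit Arguments. Unset Strict Implicit. Unset Printing Implicit Defensive.
Import Order.TTheory GRing.Theory Num.Theory.
Local Open Scope classical_set_scope.
Local Open Scope ereal_scope.

(* Fix f', g'.  The triangle inequality for the 0-1 loss gives
   R_T(fg) <= R_T(fg, f'g) + R_T(f'g, f'g') + R_T(f'g').
   The first disagreement moves from T to S at the price of the latent
   divergence (both hypotheses share the encoder g), the second at the price of
   the F_{G Delta G}-divergence (both share the head f'); each source
   disagreement is then bounded by a sum of source risks.  Taking the infimum
   over (f', g') yields lambda_FG(g). *)

Section mismatch_measure.
Context {d : measure_display} {T : measurableType d} {R : realType}.
Implicit Types u v w : T -> bool.

Lemma measurable_neq u v : measurable_fun setT u -> measurable_fun setT v ->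
  measurable [set z | u z != v z].
Proof.
move=> mfu mfv.
have mxor : measurable_fun setT (fun z => (u z && ~~ v z) || (~~ u z && v z)).
  by apply: measurable_or; apply: measurable_and => //; exact: measurable_neg.
rewrite [X in measurable X](_ : _ =
    setT `&` (fun z => (u z && ~~ v z) || (~~ u z && v z)) @^-1` [set true]).
  exact: mxor.
rewrite setTI; apply/seteqP; split => z /=; by case: (u z); case: (v z).
Qed.

Lemma measure_neq_triangle (mu : {content set T -> \bar R}%R) u v w :
  measurable_fun setT u -> measurable_fun setT v -> measurable_fun setT w ->
  mu [set z | u z != w z] <= mu [set z | u z != v z] + mu [set z | v z != w z].
Proof.
move=> mfu mfv mfw.
have muv := measurable_neq mfu mfv; have mvw := measurable_neq mfv mfw.
apply: le_trans (measureU2 mu muv mvw).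
apply: le_measure; rewrite ?inE; [exact: measurable_neq|exact: measurableU|].
move=> z /=; case: (u z); case: (v z); case: (w z) => //=; by [left|right].
Qed.

End mismatch_measure.

Lemma lee_addl_dist {R : realType} (x y : \bar R) : y \is a fin_num ->
  x <= y + `|y - x|.
Proof.
case: x y => [x| |] [y| |] //= _.
by rewrite -EFinD lee_fin -lerBlDl distrC ler_norm.
Qed.

Lemma lee_adde_ereal_inf {R : realType} (x s : \bar R) (A : set (\bar R)) :
  0 <= s -> 0 <= ereal_inf A -> (forall v, A v -> x <= s + v) ->
  x <= s + ereal_inf A.
Proof.
case: s => [s| |] //= _ A0 xA.
  by rewrite -leeBlDl //; apply/ereal_infP => v Av; rewrite leeBlDl // xA.
by rewrite addye ?leey // gt_eqF // (lt_le_trans ltNy0 A0).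
Qed.

Section risk_disagreement.
Context {d : measure_display} {X : measurableType d} {R : realType}.
Variable p : probability (X * bool)%type R.
Implicit Types h : X -> bool.

Lemma disagreement_fin_num h h' :
  measurable_fun setT h -> measurable_fun setT h' ->
  disagreement p h h' \is a fin_num.
Proof.
move=> mh mh'; apply: fin_num_measure.
exact: measurable_neq (measurableT_comp mh measurable_fst)
                      (measurableT_comp mh' measurable_fst).
Qed.

Lemma risk_le_disagreementD h h' :
  measurable_fun setT h -> measurable_fun setT h' ->
  risk p h <= disagreement p h h' + risk p h'.
Proof.
move=> mh mh'.
exact: (measure_neq_triangle p (measurableT_comp mh measurable_fst)
          (measurableT_comp mh' measurable_fst) measurable_snd).
Qed.

Lemma disagreement_triangle h1 h2 h3 : measurable_fun setT h1 ->
  measurable_fun setT h2 -> measurable_fun setT h3 ->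
  disagreement p h1 h3 <= disagreement p h1 h2 + disagreement p h2 h3.
Proof.
move=> mh1 mh2 mh3.
exact: (measure_neq_triangle p (measurableT_comp mh1 measurable_fst)
          (measurableT_comp mh2 measurable_fst)
          (measurableT_comp mh3 measurable_fst)).
Qed.

Lemma disagreement_le_riskD h h' :
  measurable_fun setT h -> measurable_fun setT h' ->
  disagreement p h h' <= risk p h + risk p h'.
Proof.
move=> mh mh'.
have -> : risk p h' = p [set xy | xy.2 != h' xy.1].
  by congr (p _); apply/seteqP; split => xy /=; rewrite eq_sym.
exact: (measure_neq_triangle p (measurableT_comp mh measurable_fst)
          measurable_snd (measurableT_comp mh' measurable_fst)).
Qed.

End risk_disagreement.

Section divergences.
Context {d : measure_display} {X : measurableType d} {R : realType} {Z : Type}.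
Variables (F : set (Z -> bool)) (pS pT : probability (X * bool)%type R).

Lemma disagreement_le_latent_div g f1 f2 : F f1 -> F f2 ->
  measurable_fun setT (f1 \o g) -> measurable_fun setT (f2 \o g) ->
  disagreement pT (f1 \o g) (f2 \o g) <=
    disagreement pS (f1 \o g) (f2 \o g) + latent_div F g pS pT.
Proof.
move=> Ff1 Ff2 m1 m2.
apply: le_trans (lee_addl_dist _ (disagreement_fin_num pS m1 m2)) _.
by apply: leeD => //; apply: ereal_sup_ubound; exists f1, f2.
Qed.

Lemma disagreement_le_FGG_div G f g1 g2 : F f -> G g1 -> G g2 ->
  measurable_fun setT (f \o g1) -> measurable_fun setT (f \o g2) ->
  disagreement pT (f \o g1) (f \o g2) <=
    disagreement pS (f \o g1) (f \o g2) + FGG_div F G pS pT.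
Proof.
move=> Ff Gg1 Gg2 m1 m2.
apply: le_trans (lee_addl_dist _ (disagreement_fin_num pS m1 m2)) _.
by apply: leeD => //; apply: ereal_sup_ubound; exists f, g1, g2.
Qed.

Lemma latent_div_ge0 g f : F f -> 0 <= latent_div F g pS pT.
Proof.
move=> Ff; apply: le_trans (abse_ge0 (disagreement pS (f \o g) (f \o g)
                                     - disagreement pT (f \o g) (f \o g))) _.
by apply: ereal_sup_ubound; exists f, f.
Qed.

Lemma FGG_div_ge0 G f g : F f -> G g -> 0 <= FGG_div F G pS pT.
Proof.
move=> Ff Gg; apply: le_trans (abse_ge0 (disagreement pS (f \o g) (f \o g)
                                        - disagreement pT (f \o g) (f \o g))) _.
by apply: ereal_sup_ubound; exists f, g, g.
Qed.

Lemma lambda_FG_ge0 G g : 0 <= lambda_FG F G pS pT g.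
Proof.
by apply/ereal_infP => _ [f' [g' [_ _ ->]]]; rewrite !adde_ge0 // mule_ge0.
Qed.

Variable G : set (X -> Z).
Hypothesis measurable_FG :
  forall f g, F f -> G g -> measurable_fun setT (f \o g).

Lemma target_risk_le f g f' g' : F f -> G g -> F f' -> G g' ->
  risk pT (f \o g) <=
    (risk pS (f \o g) + latent_div F g pS pT + FGG_div F G pS pT)
    + (2%:E * risk pS (f' \o g) + risk pS (f' \o g') + risk pT (f' \o g')).
Proof.
move=> Ff Gg Ff' Gg'.
have mfg := measurable_FG Ff Gg; have mf'g := measurable_FG Ff' Gg.
have mf'g' := measurable_FG Ff' Gg'.
have shared_encoder : disagreement pT (f \o g) (f' \o g) <=
    risk pS (f \o g) + risk pS (f' \o g) + latent_div F g pS pT.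
  apply: le_trans (disagreement_le_latent_div Ff Ff' mfg mf'g) _.
  by apply: leeD => //; exact: disagreement_le_riskD.
have shared_head : disagreement pT (f' \o g) (f' \o g') <=
    risk pS (f' \o g) + risk pS (f' \o g') + FGG_div F G pS pT.
  apply: le_trans (disagreement_le_FGG_div Ff' Gg Gg' mf'g mf'g') _.
  by apply: leeD => //; exact: disagreement_le_riskD.
apply: le_trans (risk_le_disagreementD pT mfg mf'g') _.
apply: le_trans (leeD (disagreement_triangle pT mfg mf'g mf'g') (lexx _)) _.
apply: le_trans (leeD (leeD shared_encoder shared_head) (lexx _)) _.
by rewrite mule_natl mule2n !addrA [leRHS](ACl (1*4*2*5*6*3*7))%AC.
Qed.

End divergences.

Theorem theorem4 (d : measure_display) (X : measurableType d) (R : realType)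
  (Z : Type) (G : set (X -> Z)) (F : set (Z -> bool))
  (pS pT : probability (X * bool)%type R)
  (Hmeas : forall f g, F f -> G g -> measurable_fun setT (f \o g)) :
  forall f g, F f -> G g ->
    risk pT (f \o g) <=
      risk pS (f \o g) + latent_div F g pS pT + FGG_div F G pS pT
      + lambda_FG F G pS pT g.
Proof.
move=> f g Ff Gg.
apply: lee_adde_ereal_inf.
- by rewrite !adde_ge0 ?(latent_div_ge0 pS pT g Ff) ?(FGG_div_ge0 pS pT Ff Gg).
- exact: lambda_FG_ge0.
- move=> _ [f' [g' [Ff' Gg' ->]]].
  exact: (target_risk_le pS pT Hmeas Ff Gg Ff' Gg').
Qed.
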